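(* Let $\tilde L$ be a minimum-size counterexample. If $x$ is doubly irreducible in $\tilde L$, then $|{\uparrow}x|=\frac{|\tilde L|+1}{2}$.
   Context: For a poset $P$, $x$ upper covers $y$ (and $y$ lower covers $x$) if $y<x$ with nothing strictly between. Join-irreducible: upper covers exactly one element; meet-irreducible: lower covers exactly one element; doubly irreducible: both. For $x\in P$, ${\uparrow}x=\{y\in P: x\le y\}$. A counterexample is a finite lattice $L$ with $|L|>1$ in which every join-irreducible $j$ satisfies $|{\uparrow}j|>|L|/2$; a minimum-size counterexample is a counterexample $\tilde L$ such that no counterexample has fewer elements. *)

From mathcomp Require Import all_boot all_order.
Set Implicit Arguments. Unset Strict Implicit. Unset Printing Implicit Defensive.
Import Order.TTheory.
Local Open Scope order_scope.

Section LatticeDefs.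
Context {d : Order.disp_t} {L : finLatticeType d}.

Definition ucovers (x y : L) : bool :=
  (y < x) && [forall z : L, ~~ ((y < z) && (z < x))].

Definition lower_covers (x : L) : {set L} := [set y | ucovers x y].
Definition upper_covers (x : L) : {set L} := [set y | ucovers y x].

Definition join_irreducible (x : L) : bool := #|lower_covers x| == 1%N.
Definition meet_irreducible (x : L) : bool := #|upper_covers x| == 1%N.
Definition doubly_irreducible (x : L) : bool :=
  join_irreducible x && meet_irreducible x.

Definition upset (x : L) : {set L} := [set y | x <= y].

End LatticeDefs.

Definition counterexample {d : Order.disp_t} (L : finLatticeType d) : Prop :=
  (1 < #|L|)%N /\
  forall j : L, join_irreducible j -> (#|L| < 2 * #|upset j|)%N.

Definition min_counterexample {d : Order.disp_t} (L : finLatticeType d) : Prop :=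
  counterexample L /\
  forall (d' : Order.disp_t) (L' : finLatticeType d'),
    counterexample L' -> (#|L| <= #|L'|)%N.

From mathcomp Require Import all_boot all_order.
From HB Require Import structures.
From mathcomp Require Import zify.
Set Implicit Arguments. Unset Strict Implicit. Unset Printing Implicit Defensive.
Import Order.TTheory.
Local Open Scope order_scope.

(** Removing a doubly irreducible element [x] from a lattice [L] leaves a
    lattice [L'] with one element less, so by minimality [L'] is not a
    counterexample and has a join-irreducible [j] with [2 |up' j| <= |L| - 1].
    If [j] is the unique upper cover [x^+] of [x], then [|up x| = |up' j| + 1],
    which together with [|L| < 2 |up x|] forces [2 |up x| = |L| + 1].
    Otherwise [j] is already join-irreducible in [L], so [|L| < 2 |up j|]; as
    [up' j] is [up j] minus at most [x], this needs [j < x], and then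
    [|up x| < |up j|] contradicts [|L| < 2 |up x|]. *)

Section Covers.
Context {d : Order.disp_t} {L : finLatticeType d}.
Implicit Types x y c : L.

Lemma card_upset_lt x y : x < y -> (#|upset y| < #|upset x|)%N.
Proof.
move=> xy; apply: proper_card; apply/properP; split.
  by apply/subsetP=> z; rewrite !inE; apply: le_trans (ltW xy).
by exists x; rewrite !inE ?lexx // lt_geF.
Qed.

Lemma exists_ucovers_above x y : x < y -> exists2 c, ucovers c x & c <= y.
Proof.
move=> xy; have Py : (x < y) && (y <= y) by rewrite xy lexx.
case: (@arg_maxnP L y (fun z => (x < z) && (z <= y)) (fun z => #|upset z|) Py).
move=> c /andP[xc cy] cmax; exists c => //.
rewrite /ucovers xc; apply/forallP=> w; apply/negP=> /andP[xw wc].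
have := cmax w; rewrite xw (le_trans (ltW wc) cy) => /(_ isT).
by rewrite /geq /= leqNgt card_upset_lt.
Qed.

Lemma exists_ucovers_below x y : y < x -> exists2 c, ucovers x c & y <= c.
Proof.
move=> yx; have Py : (y <= y) && (y < x) by rewrite yx lexx.
case: (@arg_minnP L y (fun z => (y <= z) && (z < x)) (fun z => #|upset z|) Py).
move=> c /andP[yc cx] cmin; exists c => //.
rewrite /ucovers cx; apply/forallP=> w; apply/negP=> /andP[cw wx].
have := cmin w; rewrite wx (le_trans yc (ltW cw)) => /(_ isT).
by rewrite /geq /= leqNgt card_upset_lt.
Qed.

(* Junk value [x] when [x] has no (or several) lower, resp. upper, covers. *)
Definition lower_cover x : L := odflt x [pick c in lower_covers x].
Definition upper_cover x : L := odflt x [pick c in upper_covers x].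

Lemma lower_coverP x : join_irreducible x ->
  forall c, ucovers x c = (c == lower_cover x).
Proof.
move=> /cards1P[l Hl] c; rewrite /lower_cover.
have -> : ucovers x c = (c \in lower_covers x) by rewrite inE.
by case: pickP => [l'|/(_ l)]; rewrite Hl !inE ?eqxx // => /eqP->.
Qed.

Lemma upper_coverP x : meet_irreducible x ->
  forall c, ucovers c x = (c == upper_cover x).
Proof.
move=> /cards1P[u Hu] c; rewrite /upper_cover.
have -> : ucovers c x = (c \in upper_covers x) by rewrite inE.
by case: pickP => [u'|/(_ u)]; rewrite Hu !inE ?eqxx // => /eqP->.
Qed.

Lemma lower_cover_lt x : join_irreducible x -> lower_cover x < x.
Proof. by move=> /lower_coverP/(_ (lower_cover x)); rewrite eqxx => /andP[]. Qed.

Lemma upper_cover_gt x : meet_irreducible x -> x < upper_cover x.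
Proof. by move=> /upper_coverP/(_ (upper_cover x)); rewrite eqxx => /andP[]. Qed.

Lemma le_lower_cover x c : join_irreducible x -> c < x -> c <= lower_cover x.
Proof.
by move=> jx /exists_ucovers_below[c' + cc']; rewrite lower_coverP // => /eqP<-.
Qed.

Lemma upper_cover_le x c : meet_irreducible x -> x < c -> upper_cover x <= c.
Proof.
by move=> mx /exists_ucovers_above[c' + c'c]; rewrite upper_coverP // => /eqP<-.
Qed.

Lemma card_upset_upper_cover x : meet_irreducible x ->
  #|upset x| = (#|upset (upper_cover x)|).+1.
Proof.
move=> mx; rewrite (cardsD1 x) inE lexx add1n; congr _.+1; apply: eq_card => y.
rewrite !inE; apply/andP/idP => [[yx xy]|uy].
  by apply: upper_cover_le; rewrite // lt_neqAle eq_sym yx xy.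
have xy := lt_le_trans (upper_cover_gt mx) uy.
by rewrite (ltW xy) (gt_eqF xy).
Qed.

End Covers.

Lemma exists_join_irreducible_small {d : Order.disp_t} (L : finLatticeType d) :
  (1 < #|L|)%N -> ~ counterexample L ->
  exists2 j : L, join_irreducible j & (2 * #|upset j| <= #|L|)%N.
Proof.
move=> L1 ceL.
suff /existsP[j /andP[jj small]] :
    [exists j : L, join_irreducible j && (2 * #|upset j| <= #|L|)%N] by exists j.
apply: contra_notT ceL => /existsPn small; split=> // j jj.
by have := small j; rewrite jj ltnNge.
Qed.

Section RemoveDoublyIrreducible.
Context {d : Order.disp_t} {L : finLatticeType d} (x : L) (dx : doubly_irreducible x).

Let jx : join_irreducible x. Proof. by case/andP: dx. Qed.
Let mx : meet_irreducible x. Proof. by case/andP: dx. Qed.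

(* The otherwise unused argument lets the lattice instance below depend on [dx]. *)
Definition removed (_ : doubly_irreducible x) := {y : L | y != x}.
Local Notation L' := (removed dx).
HB.instance Definition _ := Finite.on L'.
HB.instance Definition _ := [isSub of L' for val].
HB.instance Definition _ := [SubChoice_isSubPOrder of L' by <: with d].

Definition x_minus : L' :=
  exist _ (lower_cover x) (negbT (lt_eqF (lower_cover_lt jx))).
Definition x_plus : L' :=
  exist _ (upper_cover x) (negbT (gt_eqF (upper_cover_gt mx))).

Definition removed_meet (a b : L') : L' := insubd x_minus (val a `&` val b).
Definition removed_join (a b : L') : L' := insubd x_plus (val a `|` val b).

Lemma removed_meetP (c a b : L') : (c <= removed_meet a b) = (c <= a) && (c <= b).
Proof.
rewrite -!Order.le_val val_insubd -lexI; case: ifP => // /negbFE/eqP->.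
apply/idP/idP => [cl|cx]; first exact: le_trans cl (ltW (lower_cover_lt jx)).
by apply: le_lower_cover; rewrite // lt_neqAle cx (valP c).
Qed.

Lemma removed_joinP (a b c : L') : (removed_join a b <= c) = (a <= c) && (b <= c).
Proof.
rewrite -!Order.le_val val_insubd -leUx; case: ifP => // /negbFE/eqP->.
apply/idP/idP => [uc|xc]; first exact: le_trans (ltW (upper_cover_gt mx)) uc.
by apply: upper_cover_le; rewrite // lt_neqAle xc eq_sym (valP c).
Qed.

HB.instance Definition _ :=
  Order.POrder_MeetJoin_isLattice.Build d L' removed_meetP removed_joinP.

Lemma card_removed : #|{: L'}| = #|L|.-1.
Proof. by rewrite -(cardC1 x) -(card_sig (fun y : L => y != x)). Qed.

Lemma card_removed_gt1 : (1 < #|{: L'}|)%N.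
Proof.
apply/card_gt1P; exists x_minus, x_plus; split => //.
apply/negP => /eqP/(congr1 val) /= e.
by have := lt_trans (lower_cover_lt jx) (upper_cover_gt mx); rewrite e ltxx.
Qed.

Lemma card_upset_removed (j : L') : #|upset (val j)| = #|upset j| + (val j <= x)%O.
Proof.
rewrite (cardsD1 x) inE addnC; congr (_ + _).
rewrite -(card_imset _ val_inj); apply: eq_card => y; rewrite !inE.
apply/andP/imsetP => [[yx jy]|[z]].
  by exists (exist _ y yx); rewrite // inE -Order.le_val.
by rewrite inE -Order.le_val => jz ->; split => //; exact: (valP z).
Qed.

Lemma ucovers_removed (j z : L') :
  val j != upper_cover x -> ucovers j z = ucovers (val j) (val z).
Proof.
move=> jxu; rewrite /ucovers -lt_val; case: (val z < val j) => //=.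
apply/forallP/forallP => [Hf w|Hf w]; last by have := Hf (val w); rewrite -!lt_val.
apply/negP=> /andP[zw wj]; case: (eqVneq w x) => [wx|wx]; last first.
  by have := Hf (exist _ w wx); rewrite -!lt_val /= zw wj.
(* [x] lies strictly between [z] and [j], hence so does [x_plus]. *)
subst w; have xuj : upper_cover x < val j.
  by rewrite lt_neqAle eq_sym jxu upper_cover_le.
by have := Hf x_plus; rewrite -!lt_val /= xuj (lt_trans zw (upper_cover_gt mx)).
Qed.

Lemma join_irreducible_removed (j : L') :
  val j != upper_cover x -> join_irreducible j -> join_irreducible (val j).
Proof.
move=> jxu; rewrite /join_irreducible.
suff <- : val @: lower_covers j = lower_covers (val j).
  by rewrite card_imset //; exact: val_inj.
apply/setP => y; rewrite inE; apply/imsetP/idP => [[z]|yc].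
  by rewrite inE ucovers_removed // => ? ->.
have yx : y != x by apply: contraTneq yc => ->; rewrite upper_coverP.
by exists (exist _ y yx) => //; rewrite inE ucovers_removed.
Qed.

End RemoveDoublyIrreducible.

Theorem lemma2p5 (d : Order.disp_t) (L : finLatticeType d) (x : L) :
  min_counterexample L -> doubly_irreducible x ->
  (2 * #|upset x| = #|L| + 1)%N.
Proof.
move=> [[L1 ceL] minL] dx; have /andP[jx mx] := dx.
have := ceL x jx; rewrite (card_upset_upper_cover mx) => x_large.
have : ~ counterexample (removed dx) by move=> /minL; rewrite card_removed; lia.
case/(exists_join_irreducible_small (card_removed_gt1 dx)) => j jj.
rewrite card_removed; move: (card_upset_removed j).
have [->|jxu] := eqVneq (val j) (upper_cover x).
  by rewrite (lt_geF (upper_cover_gt mx)); lia.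
have := ceL _ (join_irreducible_removed jxu jj).
case: (boolP (val j <= x)%O) => [jlex|_]; last by lia.
have jltx : (val j < x)%O by rewrite lt_neqAle jlex (valP j).
have := card_upset_lt jltx; rewrite (card_upset_upper_cover mx); lia.
Qed.
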